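(* Let $k\ge1$, $r=\sqrt[k]{p}$. On recursion level $t$ ($1\le t\le k$) of multi-level MS using character-based regular sampling with sampling factor $v>0$, each bucket contains at most $$\|B^j\|\le\Bigl(1+\frac{r}{v}\Bigr)^t\Bigl(\frac{N}{r^t}+t\Bigl(1+\frac{v+1}{r}\Bigr)\frac{p}{r^{t-1}}\hat{\ell}\Bigr)$$ characters.
   Context: $p$ PEs hold strings with $N$ characters in total; $\hat{\ell}$ is the length of the longest string; $\|X\|$ denotes the number of characters of a set of strings $X$. Multi-level MS (with $p=r^k$): each PE sorts its local strings; then on each level $t=1,\dots,k$ the PEs form $r^{t-1}$ groups of $p'=r^{k+1-t}$ consecutive PEs, each group independently sorting the concatenation $S'$ of its PEs' locally sorted arrays $S_i$ (on level $t>1$ the strings of a group are exactly one bucket of the previous level): $r-1$ splitters $f_1<\dots<f_{r-1}$ are chosen, bucket $B^j=\bigcup_i\{s\in S_i:f_j<s\le f_{j+1}\}$ ($f_0=-\infty,f_r=\infty$) goes to the $j$-th subgroup of $p'/r$ PEs, and received sequences are merged. Character-based regular sampling with factor $v$: with $\omega'=\|S'\|/(p'(v+1))$, PE $i$ draws $\lceil\|S_i\|/\omega'\rceil-1$ equally spaced positions in its local character array (concatenation of its strings), each position is shifted (by at most $\hat{\ell}-1$) to the beginning of the string containing it, and these strings are the samples; if fewer than $p'(v+1)$ samples result, the first PEs draw one additional sample each. The samples $V$ are sorted globally and $f_j=V[j|V|/r-1]$ for $0<j<r$. *)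

From mathcomp Require Import all_boot all_order all_algebra.
Import Order.TTheory GRing.Theory Num.Theory.
Set Implicit Arguments. Unset Strict Implicit. Unset Printing Implicit Defensive.

Definition string := seq nat.
Definition str_le (s t : string) : bool := ((s : seqlexi nat) <= (t : seqlexi nat))%O.
Definition str_lt (s t : string) : bool := ((s : seqlexi nat) < (t : seqlexi nat))%O.

Definition nchars (X : seq string) : nat := sumn (map size X).

(* The string of the (locally sorted) array [Si] that contains character
   position [x] of the concatenation of the strings of [Si]
   (i.e. [x] shifted to the beginning of the string containing it). *)
Local Open Scope ring_scope.
Fixpoint str_at (Si : seq string) (x : rat) : string :=
  match Si with
  | [::] => [::]%N
  | s :: rest => if x < (size s)%:R then s else str_at rest (x - (size s)%:R)
  end.

Section Sampling.
(* A group is given by the sequence [S] of the locally sorted arrays S_i of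
   its p' = size S PEs. *)
Variable v : nat.

Definition omega (S : seq (seq string)) : rat :=
  (nchars (flatten S))%:R / ((size S * v.+1)%N)%:R.

Definition ncuts (S : seq (seq string)) (Si : seq string) : nat :=
  `|Num.ceil ((nchars Si)%:R / omega S)|%N.

Definition reg_samples (S : seq (seq string)) (Si : seq string) : seq string :=
  let c := ncuts S Si in
  [seq str_at Si ((nchars Si)%:R * m%:R / c%:R) | m <- iota 1 c.-1].

Definition deficit (S : seq (seq string)) : nat :=
  ((size S * v.+1) - sumn [seq size (reg_samples S Si) | Si <- S])%N.

(* The first [deficit S] PEs draw one additional sample each; which string
   of its local array the additional sample is, is left arbitrary (given by
   [e i]); a PE without any string cannot draw a sample. *)
Definition extra_ok (S : seq (seq string)) (e : nat -> string) : Prop :=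
  forall i, (i < size S)%N -> nth [::] S i != [::] -> e i \in nth [::] S i.

Definition samples (S : seq (seq string)) (e : nat -> string) : seq string :=
  flatten [seq reg_samples S (nth [::] S i) ++
              (if (i < deficit S)%N && (nth [::] S i != [::]) then [:: e i] else [::])
          | i <- iota 0 (size S)].

Variable r : nat.

Definition splitter (S : seq (seq string)) (e : nat -> string) (j : nat) : string :=
  let V := sort str_le (samples S e) in
  nth [::] V ((j * size V) %/ r).-1.

Definition bucket (S : seq (seq string)) (e : nat -> string) (j : nat) : seq string :=
  [seq s <- flatten S |
    ((j == 0)%N || str_lt (splitter S e j) s) &&
    ((j.+1 == r)%N || str_le s (splitter S e j.+1))].

(* Groups occurring on level t of multi-level MS (k levels) on input [inp]:
   level 1 is one group of all PEs, each having sorted its local strings;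
   a group of level t+1 (t < k) consists of size S / r PEs that receive
   bucket j of a level-t group S (distributed arbitrarily among them), each
   merging what it receives into a sorted local array. *)
Inductive mlevel_group (k : nat) (inp : seq (seq string)) :
    nat -> seq (seq string) -> Prop :=
  | mlg_first : mlevel_group k inp 1 [seq sort str_le s | s <- inp]
  | mlg_next t S e j C :
      mlevel_group k inp t S -> (t < k)%N -> extra_ok S e -> (j < r)%N ->
      size C = (size S %/ r)%N -> all (sorted str_le) C ->
      perm_eq (flatten C) (bucket S e j) ->
      mlevel_group k inp t.+1 C.

End Sampling.

From mathcomp Require Import all_boot all_order all_algebra.
Import Order.TTheory GRing.Theory Num.Theory.
From mathcomp Require Import zify ring lra.
Set Implicit Arguments. Unset Strict Implicit. Unset Printing Implicit Defensive.

(* Fix a group of p' PEs holding n characters and let w = n / (p' (v + 1)).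
   Consecutive regular samples of one PE are at most w characters apart, so
   the strings of PE i lying strictly between two consecutive splitters, which
   form a contiguous block of its sorted array, carry at most w (c_i + 1)
   characters, where c_i is the number of samples of PE i in that block.
   Strictly between two consecutive splitters lie at most p' (v + 1) / r
   samples, so summing over the PEs bounds a bucket by n / r + n / (v + 1),
   plus at most lhat characters for the upper splitter itself.  Starting from
   n = N on level 1, this recursion stays below the claimed bound because
   1 / r + 1 / (v + 1) <= (1 + r / v) / r. *)

Definition order_convex (T : Type) (leT : rel T) (P : pred T) :=
  forall x y z, P x -> P z -> leT x y -> leT y z -> P y.

Lemma sorted_convex_filter (T : eqType) (leT : rel T) (P : pred T) s :
  transitive leT -> sorted leT s -> order_convex leT P ->
  exists X Z, s = X ++ filter P s ++ Z.
Proof.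
move=> leT_tr srt cvx.
suff [X [Z [sE _]]] : exists X Z, s = X ++ filter P s ++ Z /\ ~~ has P X.
  by exists X, Z.
elim: s srt => [|a s IH] srt; first by exists [::], [::].
have [X [Z [sE nX]]] := IH (path_sorted srt).
have [Pa|nPa] := boolP (P a); last by exists (a :: X), Z; rewrite /= (negbTE nPa) -sE.
case: X sE nX => [|x X] /= sE nX; first by exists [::], Z; rewrite /= Pa cat_cons -sE.
case fE: (filter P s) sE => [|y Y] sE.
  by exists [::], s; rewrite /= Pa.
have: P x.
  move: srt; rewrite sE (sorted_pairwise leT_tr) /=.
  case/and3P=> /andP[ax _] /allP xy _.
  have Py : P y by have := mem_head y Y; rewrite -fE mem_filter => /andP[].
  by apply: cvx Pa Py ax (xy y _); rewrite mem_cat mem_head orbT.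
by move: nX => /= /norP[/negP].
Qed.

Lemma nchars_cat a b : nchars (a ++ b) = nchars a + nchars b.
Proof. by rewrite /nchars map_cat sumn_cat. Qed.

Lemma nchars_flatten L : nchars (flatten L) = sumn (map nchars L).
Proof. by elim: L => [|X L IH] //=; rewrite nchars_cat IH. Qed.

Lemma nchars_cons s X : nchars (s :: X) = size s + nchars X.
Proof. by []. Qed.

Lemma nchars_filter_le (a : pred string) X : nchars (filter a X) <= nchars X.
Proof. by elim: X => [|s X IH] //=; case: (a s); rewrite !nchars_cons; lia. Qed.

Lemma nchars_filter_le_cover (a b c : pred string) X :
  (forall s, a s -> b s || c s) ->
  nchars (filter a X) <= nchars (filter b X) + nchars (filter c X).
Proof.
move=> cover; elim: X => [|s X IH] //=.
case: (a s) (cover s) => [/(_ isT)|_] /=; case: (b s); case: (c s) => //= *;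
  rewrite ?nchars_cons; lia.
Qed.

Lemma nchars_le_flatten X L : X \in L -> nchars X <= nchars (flatten L).
Proof.
elim: L => [|Y L IH] //=; rewrite inE nchars_cat => /predU1P[->|/IH X_le].
  exact: leq_addr.
exact: leq_trans X_le (leq_addl _ _).
Qed.

Lemma nchars_perm X Y : perm_eq X Y -> nchars X = nchars Y.
Proof. by move=> pXY; apply: perm_sumn; apply: perm_map. Qed.

Lemma count_iota_le_interval (P : pred nat) lo hi m n :
  (forall i, m <= i < m + n -> P i -> lo <= i < hi) -> count P (iota m n) <= hi - lo.
Proof.
move=> inside; rewrite -size_filter -(size_iota lo (hi - lo)).
apply: uniq_leq_size; first exact/filter_uniq/iota_uniq.
move=> i; rewrite mem_filter !mem_iota => /andP[Pi /inside/(_ Pi)]; lia.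
Qed.

Lemma interval_le_count_iota (P : pred nat) lo hi m n :
  (forall i, lo <= i < hi -> [&& m <= i, i < m + n & P i]) -> hi - lo <= count P (iota m n).
Proof.
move=> inside; rewrite -size_filter -(size_iota lo (hi - lo)).
apply: uniq_leq_size; first exact: iota_uniq.
move=> i; rewrite mem_filter !mem_iota => lo_i_hi.
have /and3P[-> -> ->] // : [&& m <= i, i < m + n & P i] by apply: inside; lia.
Qed.

Lemma count_multiples_ge T n a b : 0 < T -> b <= T * n.+1 ->
  b - a <= T * (count (fun m => a <= T * m < b) (iota 1 n)).+1.
Proof.
move=> T_gt0 b_le.
(* The multiples [T * m] with [a %/ T < m <= b.-1 %/ T] lie in [[a, b)]. *)
have : (b.-1 %/ T).+1 - (a %/ T).+1 <= count (fun m => a <= T * m < b) (iota 1 n).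
  by apply: interval_le_count_iota => i; nia.
nia.
Qed.

Lemma count_between_quantiles d (T : orderType d) (x0 : T) (V : seq T) r j Q (P : pred T) :
  sorted <=%O V -> 0 < r -> j < r -> size V <= r * Q ->
  (forall s, P s -> (j == 0) || (nth x0 V ((j * size V) %/ r).-1 < s)%O) ->
  (forall s, P s -> (j.+1 == r) || (s < nth x0 V ((j.+1 * size V) %/ r).-1)%O) ->
  count P V <= Q.
Proof.
move=> V_sorted r_gt0 j_lt VQ above below.
have mono := sorted_leq_nth le_trans lexx x0 V_sorted.
rewrite -[V in count P V](mkseq_nth x0) /mkseq count_map.
set m := size V in VQ above below mono *.
(* The indices of the elements of [P] lie in [[j m / r, (j + 1) m / r - 1)]. *)
apply: leq_trans (count_iota_le_interval
  (lo := (j * m) %/ r) (hi := if j.+1 == r then m else ((j.+1 * m) %/ r).-1) _) _.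
- move=> i /andP[_ i_lt] /= Pi; apply/andP; split.
  + have [->|j_gt0] := posnP j; first by rewrite mul0n div0n.
    move: (above _ Pi); rewrite gtn_eqF //= leqNgt; apply: contraTN => lt_lo.
    by rewrite -leNgt mono ?inE //; nia.
  + case: eqP => [//|/eqP j1_ne]; move: (below _ Pi); rewrite (negbTE j1_ne) /=.
    apply: contraTT; rewrite -leqNgt -leNgt => hi_le_i.
    by rewrite mono ?inE //; nia.
- case: eqP => [j1_eq|_]; nia.
Qed.

Lemma str_le_trans : transitive str_le.
Proof. by move=> y x z; apply: le_trans. Qed.

Lemma str_le_total : total str_le.
Proof. by move=> s t; apply: le_total. Qed.

Local Open Scope ring_scope.

Lemma str_at_cat X W (x : rat) : (nchars X)%:R <= x ->
  str_at (X ++ W) x = str_at W (x - (nchars X)%:R).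
Proof.
elim: X x => [|s X IH] x /=; first by rewrite subr0.
rewrite natrD => X_le; have -> : (x < (size s)%:R) = false.
  by apply/negbTE; rewrite -leNgt; apply: le_trans X_le; rewrite lerDl.
by rewrite IH ?opprD ?addrA //; lra.
Qed.

Lemma str_at_mem Y W (y : rat) : 0 <= y < (nchars Y)%:R -> str_at (Y ++ W) y \in Y.
Proof.
elim: Y y => [|s Y IH] y /andP[y_ge0 y_lt] /=.
  by move: y_lt; rewrite ltNge y_ge0.
case: ifP => [_|/negbT]; first exact: mem_head.
move: y_lt; rewrite natrD -leNgt => y_lt s_le; rewrite inE IH ?orbT //; lra.
Qed.

Lemma nchars_convex_filter_le_cuts (P : pred string) Si c :
  sorted str_le Si -> order_convex str_le P -> (0 < c)%N ->
  ((nchars (filter P Si))%:R : rat) <=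
    (nchars Si)%:R / c%:R *
    ((count P [seq str_at Si ((nchars Si)%:R * m%:R / c%:R) | m <- iota 1 c.-1])%:R + 1).
Proof.
move=> Si_sorted P_convex c_gt0.
(* [filter P Si] occupies a range [[A, A + L)] of character positions, and every
   cut position [T m / c] in that range selects a string of [filter P Si]. *)
have [X [Z SiE]] := sorted_convex_filter str_le_trans Si_sorted P_convex.
have c_gt0' : (0 : rat) < c%:R by rewrite ltr0n.
set T := nchars Si; set Y := filter P Si in SiE *.
set A := nchars X; set L := nchars Y.
have TE : T = (A + L + nchars Z)%N by rewrite /T {1}SiE !nchars_cat addnA.
have [T0|T_gt0] := posnP T.
  have -> : L = 0%N by move: TE; rewrite T0; lia.
  by rewrite mulr_ge0 ?divr_ge0 ?addr_ge0.
have b_le : ((A + L) * c <= T * c.-1.+1)%N.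
  by rewrite prednK // TE leq_mul2r leq_addr orbT.
have := count_multiples_ge (A * c) T_gt0 b_le.
set cnt := count _ _; rewrite mulnDl addKn => L_le.
have cnt_le : (cnt <= count P [seq str_at Si (T%:R * m%:R / c%:R) | m <- iota 1 c.-1])%N.
  rewrite count_map; apply: sub_count => m /andP[lo hi] /=.
  have lo' : A%:R <= T%:R * m%:R / c%:R :> rat by rewrite ler_pdivlMr // -!natrM ler_nat.
  have hi' : T%:R * m%:R / c%:R < (A + L)%:R :> rat by rewrite ltr_pdivrMr // -!natrM ltr_nat.
  have : str_at Si (T%:R * m%:R / c%:R) \in Y.
    by rewrite {1}SiE str_at_cat // str_at_mem //; move: hi'; rewrite natrD; lra.
  by rewrite mem_filter => /andP[].
rewrite mulrAC ler_pdivlMr // -natrM natr1 -natrM ler_nat.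
by apply: leq_trans L_le _; rewrite leq_mul2l ltnS cnt_le orbT.
Qed.

Section Sampling.
Variables (v : nat) (S : seq (seq string)).

Lemma omega_ge0 : 0 <= omega v S.
Proof. exact: divr_ge0. Qed.

Lemma ncuts_bounds Si :
  ((ncuts v S Si).-1)%:R <= (nchars Si)%:R / omega v S <= (ncuts v S Si)%:R.
Proof.
set x := _ / omega v S; have x_ge0 : 0 <= x by rewrite divr_ge0 ?omega_ge0.
have cE : (ncuts v S Si)%:R = (Num.ceil x)%:~R :> rat.
  by rewrite /ncuts -/x natr_absz ger0_norm // ceil_ge0; lra.
rewrite cE ceil_ge andbT; have := ceilB1_lt x; rewrite rmorphB /= -cE.
by case: (ncuts v S Si) => [|c] //= /ltW; rewrite -natr1 addrK.
Qed.

Lemma sum_size_reg_samples_le :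
  (\sum_(Si <- S) size (reg_samples v S Si) <= size S * v.+1)%N.
Proof.
rewrite -(ler_nat rat) natr_sum.
apply: le_trans (_ : \sum_(Si <- S) (nchars Si)%:R / omega v S <= _).
  apply: ler_sum => Si _; rewrite size_map size_iota.
  by case/andP: (ncuts_bounds Si).
rewrite -mulr_suml -natr_sum.
have -> : (\sum_(Si <- S) nchars Si)%N = nchars (flatten S).
  by rewrite nchars_flatten sumnE big_map.
rewrite /omega.
set n := (nchars _)%:R; set K := (_ * _)%N%:R.
have [->|n_ne0] := eqVneq n 0; first by rewrite mul0r.
by rewrite invf_div mulrA mulrAC divff // mul1r.
Qed.

Lemma size_samples_le e : (size (samples v S e) <= size S * v.+1)%N.
Proof.
set R := (\sum_(Si <- S) size (reg_samples v S Si))%N.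
have R_le : (R <= size S * v.+1)%N := sum_size_reg_samples_le.
have deficitE : deficit v S = (size S * v.+1 - R)%N by rewrite /deficit sumnE big_map.
have RE : R = (\sum_(i <- iota 0 (size S)) size (reg_samples v S (nth [::] S i)))%N.
  by rewrite /R (big_nth [::]) /index_iota subn0.
have extra_le : (\sum_(i <- iota 0 (size S))
    size (if (i < deficit v S)%N && (nth [::] S i != [::]) then [:: e i] else [::])
  <= deficit v S)%N.
  apply: leq_trans (_ : \sum_(i <- iota 0 (size S) | (i < deficit v S)%N) 1 <= _)%N.
    by rewrite [leqRHS]big_mkcond; apply: leq_sum => i _; do 2 case: ifP.
  by rewrite sum1_count -[leqRHS]subn0; apply: count_iota_le_interval => i _ ->.
rewrite size_flatten /shape -map_comp sumnE big_map.
under eq_bigr do rewrite /= size_cat.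
rewrite big_split /= -RE; apply: leq_trans (leq_add (leqnn R) extra_le) _; lia.
Qed.

Lemma nchars_convex_filter_le_reg_samples (P : pred string) Si :
  Si \in S -> sorted str_le Si -> order_convex str_le P ->
  (nchars (filter P Si))%:R <= omega v S * ((count P (reg_samples v S Si))%:R + 1).
Proof.
move=> Si_in Si_sorted P_convex.
have [Si0|Si_gt0] := posnP (nchars Si).
  have -> : nchars (filter P Si) = 0%N by apply/eqP; rewrite -leqn0 -Si0 nchars_filter_le.
  by rewrite mulr_ge0 ?omega_ge0 ?addr_ge0.
have w_gt0 : 0 < omega v S.
  have S_gt0 : (0 < size S)%N by case: S Si_in.
  by rewrite divr_gt0 ?ltr0n ?muln_gt0 ?S_gt0 // (leq_trans Si_gt0 (nchars_le_flatten Si_in)).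
have /andP[_ c_ge] := ncuts_bounds Si.
have c_gt0 : (0 < ncuts v S Si)%N.
  by rewrite -(ltr_nat rat); apply: lt_le_trans c_ge; rewrite divr_gt0 ?ltr0n.
apply: le_trans (nchars_convex_filter_le_cuts Si_sorted P_convex c_gt0) _.
by rewrite ler_wpM2r ?addr_ge0 // ler_pdivrMr ?ltr0n // mulrC -ler_pdivrMr.
Qed.

Lemma sum_count_reg_samples_le (P : pred string) e :
  (\sum_(Si <- S) count P (reg_samples v S Si) <= count P (samples v S e))%N.
Proof.
rewrite count_flatten -map_comp sumnE big_map (big_nth [::]) /index_iota subn0.
by apply: leq_sum => i _; rewrite /= count_cat leq_addr.
Qed.

Lemma nchars_convex_filter_flatten_le (P : pred string) e :
  all (sorted str_le) S -> order_convex str_le P ->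
  (nchars (filter P (flatten S)))%:R <=
    omega v S * ((count P (samples v S e))%:R + (size S)%:R).
Proof.
move=> S_sorted P_convex.
rewrite filter_flatten nchars_flatten -map_comp sumnE big_map natr_sum.
apply: le_trans (_ : \sum_(Si <- S) omega v S * (count P (reg_samples v S Si)).+1%:R <= _).
  rewrite !big_seq; apply: ler_sum => Si Si_in; rewrite -natr1.
  by apply: nchars_convex_filter_le_reg_samples => //; apply: (allP S_sorted).
rewrite -mulr_sumr -natr_sum ler_wpM2l ?omega_ge0 //.
under eq_bigr do rewrite -addn1.
by rewrite big_split /= sum1_size -natrD ler_nat leq_add2r sum_count_reg_samples_le.
Qed.

End Sampling.

Section Bucket.
Variables (v r : nat) (S : seq (seq string)) (e : nat -> string) (j : nat).

Definition bucket_interior : pred string := fun s =>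
  ((j == 0)%N || str_lt (splitter v r S e j) s) &&
  ((j.+1 == r)%N || str_lt s (splitter v r S e j.+1)).

Lemma bucket_interior_convex : order_convex str_le bucket_interior.
Proof.
move=> x y z /andP[x_above _] /andP[_ z_below] xy yz; apply/andP; split.
  by case/orP: x_above => [->//|fx]; rewrite /str_lt (lt_le_trans fx xy) orbT.
by case/orP: z_below => [->//|zf]; rewrite /str_lt (le_lt_trans yz zf) orbT.
Qed.

Lemma count_bucket_interior_samples_le : (0 < r)%N -> (j < r)%N -> (r %| size S)%N ->
  (count bucket_interior (samples v S e) <= size S * v.+1 %/ r)%N.
Proof.
move=> r_gt0 j_lt r_dvd.
rewrite -(permP (permEl (perm_sort str_le _))).
apply: (count_between_quantiles (x0 := [::] : seqlexi nat) (r := r) (j := j)) => //.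
- by rewrite size_sort mulnC divnK ?dvdn_mulr // size_samples_le.
- by move=> s /andP[].
- by move=> s /andP[].
Qed.

Lemma nchars_bucket_le_interior lhat : uniq (flatten S) ->
  (forall s, s \in flatten S -> size s <= lhat)%N ->
  (nchars (bucket v r S e j) <= nchars (filter bucket_interior (flatten S)) + lhat)%N.
Proof.
move=> S_uniq size_le; set f := splitter v r S e j.+1.
(* Outside the interior, the bucket can only contain the (unique) string [f]. *)
apply: leq_trans (nchars_filter_le_cover (b := bucket_interior) (c := pred1 f) _ _) _.
  move=> s; rewrite /bucket_interior /str_lt /str_le /= => /andP[-> /orP[->//|]].
  by rewrite le_eqVlt => /orP[/eqP->|->]; rewrite ?eqxx ?orbT.
rewrite leq_add2l; have [f_in|f_notin] := boolP (f \in flatten S).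
  by rewrite filter_pred1_uniq // nchars_cons addn0 size_le.
suff -> : filter (pred1 f) (flatten S) = [::] by [].
by apply/eqP; rewrite -size_eq0 size_filter; apply/eqP/count_memPn.
Qed.

Lemma nchars_bucket_le lhat : (0 < r)%N -> (j < r)%N -> (r %| size S)%N ->
  all (sorted str_le) S -> uniq (flatten S) ->
  (forall s, s \in flatten S -> size s <= lhat)%N ->
  ((nchars (bucket v r S e j))%:R : rat) <=
    (nchars (flatten S))%:R / r%:R + (nchars (flatten S))%:R / v.+1%:R + lhat%:R.
Proof.
move=> r_gt0 j_lt r_dvd S_sorted S_uniq size_le.
apply: le_trans (_ : (nchars (filter bucket_interior (flatten S)))%:R + lhat%:R <= _).
  by rewrite -natrD ler_nat nchars_bucket_le_interior.
rewrite lerD2r.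
apply: le_trans (nchars_convex_filter_flatten_le v e S_sorted bucket_interior_convex) _.
apply: le_trans (_ : omega v S * ((size S * v.+1 %/ r)%:R + (size S)%:R) <= _).
  by rewrite ler_wpM2l ?omega_ge0 // lerD2r ler_nat count_bucket_interior_samples_le.
have [/size0nil S0|S_gt0] := posnP (size S).
  by rewrite /omega S0 /= !mul0r.
rewrite natf_div ?dvdn_mulr // /omega natrM.
have r_ne0 : r%:R != 0 :> rat by rewrite pnatr_eq0 -lt0n.
have S_ne0 : (size S)%:R != 0 :> rat by rewrite pnatr_eq0 -lt0n.
have v_ne0 : 1 + v%:R != 0 :> rat by rewrite addrC natr1 pnatr_eq0.
by rewrite le_eqVlt; apply/predU1P; left; field; rewrite v_ne0 r_ne0 S_ne0.
Qed.

End Bucket.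

Definition level_bound (r v N p lhat t : nat) : rat :=
  (1 + r%:R / v%:R) ^+ t *
    (N%:R / (r ^ t)%:R + t%:R * (1 + (v%:R + 1) / r%:R) * (p%:R / (r ^ t.-1)%:R) * lhat%:R).

Section LevelBound.
Variables (r v N k lhat : nat).
Hypotheses (r_gt0 : (0 < r)%N) (v_gt0 : (0 < v)%N).

Lemma level_bound0 : level_bound r v N (r ^ k) lhat 0 = N%:R.
Proof. by rewrite /level_bound expr0 mul1r expn0 divr1 !mul0r addr0. Qed.

Lemma level_boundS t :
  level_bound r v N (r ^ k) lhat t.+1 =
    level_bound r v N (r ^ k) lhat t * (1 + r%:R / v%:R) / r%:R
    + (1 + r%:R / v%:R) ^+ t.+1 * (1 + (v%:R + 1) / r%:R) * ((r ^ k)%:R / (r ^ t)%:R) * lhat%:R.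
Proof.
have r_ne0 : r%:R != 0 :> rat by rewrite pnatr_eq0 -lt0n.
have v_ne0 : v%:R != 0 :> rat by rewrite pnatr_eq0 -lt0n.
rewrite /level_bound !natrX; case: t => [|t] /=.
  by rewrite expr0 expr1; field; rewrite r_ne0 v_ne0.
by rewrite !exprS; field; rewrite expf_neq0 ?r_ne0.
Qed.

Lemma level_bound_step t (n : rat) : (t < k)%N -> 0 <= n ->
  n <= level_bound r v N (r ^ k) lhat t ->
  n / r%:R + n / v.+1%:R + lhat%:R <= level_bound r v N (r ^ k) lhat t.+1.
Proof.
move=> t_lt n_ge0 n_le; rewrite level_boundS.
(* [1 / r + 1 / (v + 1) <= (1 + r / v) / r], and the new summand of the bound
   absorbs [lhat] because [p / r ^ t >= 1]. *)
have r_gt0' : 0 < r%:R :> rat by rewrite ltr0n.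
have v_gt0' : 0 < v%:R :> rat by rewrite ltr0n.
set a := 1 + r%:R / v%:R.
have a_ge1 : 1 <= a by rewrite lerDl divr_ge0 ?ltW.
apply: lerD.
  apply: le_trans (_ : n * a / r%:R <= _); last first.
    by rewrite ler_pM2r ?invr_gt0 // ler_pM2r // (lt_le_trans ltr01).
  have -> : n * a / r%:R = n / r%:R + n / v%:R.
    by rewrite /a; field; rewrite !lt0r_neq0.
  rewrite lerD2l ler_pdivrMr ?ltr0n // mulrAC ler_pdivlMr //.
  by rewrite ler_wpM2l // ler_nat.
apply: ler_peMl => //; apply: mulr_ege1; first apply: mulr_ege1.
- exact: exprn_ege1.
- by rewrite lerDl divr_ge0 ?addr_ge0.
- by rewrite ler_pdivlMr ?ltr0n ?expn_gt0 ?r_gt0 // mul1r ler_nat leq_pexp2l // ltnW.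
Qed.

End LevelBound.

Lemma perm_flatten_sort (T : eqType) (leT : rel T) (ss : seq (seq T)) :
  perm_eq (flatten [seq sort leT s | s <- ss]) (flatten ss).
Proof. by elim: ss => //= s ss IH; apply: perm_cat IH; rewrite perm_sort. Qed.

Section MultiLevel.
Variables (v r k : nat) (inp : seq (seq string)).
Hypotheses (r_gt0 : (0 < r)%N) (v_gt0 : (0 < v)%N).
Hypotheses (inp_size : size inp = (r ^ k)%N) (inp_uniq : uniq (flatten inp)).

Let N := nchars (flatten inp).
Let lhat := (\max_(s <- flatten inp) size s)%N.

Lemma mlevel_group_size t S : mlevel_group v r k inp t S ->
  (0 < t)%N /\ ((t <= k)%N -> size S = (r ^ (k - t).+1)%N).
Proof.
elim=> [|{}t {}S e j C _ [t_gt0 S_size] t_lt _ _ C_size _ _].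
  by split=> // k_gt0; rewrite size_map inp_size subn1 prednK.
split=> // _; rewrite C_size S_size 1?ltnW // expnS mulKn // subnSK //.
Qed.

Lemma mlevel_group_sorted_uniq_sub t S : mlevel_group v r k inp t S ->
  [/\ all (sorted str_le) S, uniq (flatten S) & {subset flatten S <= flatten inp}].
Proof.
elim=> [|{}t {}S e j C _ [_ S_uniq S_sub] _ _ _ _ C_sorted C_perm].
  have inp_perm := perm_flatten_sort str_le inp.
  split=> [||s]; last by rewrite (perm_mem inp_perm).
  - by apply/allP => _ /mapP[s _ ->]; exact: sort_sorted str_le_total s.
  - by rewrite (perm_uniq inp_perm).
have bucket_sub : {subset bucket v r S e j <= flatten S}.
  by move=> s; rewrite mem_filter => /andP[].
split=> //; first by rewrite (perm_uniq C_perm) filter_uniq.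
by move=> s; rewrite (perm_mem C_perm) => /bucket_sub /S_sub.
Qed.

Lemma nchars_bucket_le_level_bound t S e j :
  mlevel_group v r k inp t.+1 S -> (t < k)%N -> (j < r)%N ->
  (nchars (flatten S))%:R <= level_bound r v N (r ^ k) lhat t ->
  (nchars (bucket v r S e j))%:R <= level_bound r v N (r ^ k) lhat t.+1.
Proof.
move=> S_group t_lt j_lt S_le.
have [_ S_size] := mlevel_group_size S_group.
have [S_sorted S_uniq S_sub] := mlevel_group_sorted_uniq_sub S_group.
apply: le_trans (level_bound_step r_gt0 v_gt0 t_lt (ler0n _ _) S_le).
apply: nchars_bucket_le => //.
- by rewrite S_size // expnS dvdn_mulr.
- by move=> s /S_sub s_in; apply: leq_bigmax_seq.
Qed.

Lemma mlevel_group_nchars_le t S : mlevel_group v r k inp t S ->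
  (nchars (flatten S))%:R <= level_bound r v N (r ^ k) lhat t.-1.
Proof.
elim=> [|{}t {}S e j C S_group S_le t_lt _ j_lt _ _ C_perm].
  have inp_perm := perm_flatten_sort str_le inp.
  by rewrite level_bound0 (nchars_perm inp_perm).
have [t_gt0 _] := mlevel_group_size S_group.
rewrite (nchars_perm C_perm); case: t t_gt0 S_group S_le t_lt => [//|t] _ S_group S_le t_lt.
exact: nchars_bucket_le_level_bound S_group (ltnW t_lt) j_lt S_le.
Qed.

End MultiLevel.

Unset Implicit Arguments.

Theorem lemma4 (p k r v : nat) (inp : seq (seq string)) :
  (1 <= k)%N -> (0 < r)%N -> p = (r ^ k)%N -> (0 < v)%N ->
  size inp = p ->
  uniq (flatten inp) ->
  let N := nchars (flatten inp) in
  let lhat := (\max_(s <- flatten inp) size s)%N in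
  forall (t : nat) (S : seq (seq string)) (e : nat -> string) (j : nat),
    (1 <= t <= k)%N ->
    mlevel_group v r k inp t S ->
    extra_ok S e ->
    (j < r)%N ->
    (((nchars (bucket v r S e j))%:R : rat)
      <= (1 + r%:R / v%:R) ^+ t *
         (N%:R / (r ^ t)%:R
          + t%:R * (1 + (v%:R + 1) / r%:R) * (p%:R / (r ^ t.-1)%:R) * lhat%:R))%R.
Proof.
move=> _ r_gt0 -> v_gt0 inp_size inp_uniq N lhat [//|t] S e j /andP[_ t_lt] S_group.
(* The bound holds whichever additional samples are drawn. *)
move=> _ j_lt.
have S_le := mlevel_group_nchars_le r_gt0 v_gt0 inp_size inp_uniq S_group.
exact (nchars_bucket_le_level_bound r_gt0 v_gt0 inp_size inp_uniq e S_group
         t_lt j_lt S_le).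
Qed.
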